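(* Let $1\le k\le d$ be integers and let $(p_m)_{m\in\mathbb Z}$ be the sequence defined below. Then for every integer $m\ge0$, $$p_m=\sum_{\ell=0}^{m}(-1)^\ell(d-k)^{m-\ell}\binom{d-k+\ell-1}{\ell}.$$ In particular, for an integer $\mu\ge0$, the numbers $t_m:=p_{\mu-m}$ ($0\le m\le\mu$) are the unique solution of $t_\mu=1$ and $t_m=\sum_{j=m+1}^{\mu}t_j\,(j-m-1)\binom{d-k+1}{j-m}$ for $0\le m<\mu$.
   Context: Sequence: $p_m=0$ for $m<0$, $p_0=1$, and $p_m=\sum_{\ell=1}^{m}(\ell-1)\binom{d-k+1}{\ell}p_{m-\ell}$ for $m\ge1$. Conventions: $0^0=1$; for integers $r$ and $\ell\ge0$, $\binom{r}{\ell}=r(r-1)\cdots(r-\ell+1)/\ell!$ (so $\binom{r}{0}=1$), and $\binom{r}{\ell}=0$ for $\ell<0$. *)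

From HB Require Import structures.
From mathcomp Require Import all_boot all_order all_algebra.
Set Implicit Arguments. Unset Strict Implicit. Unset Printing Implicit Defensive.

From HB Require Import structures.
From mathcomp Require Import all_boot all_order all_algebra.
From mathcomp Require Import zify ring.
Import Order.TTheory GRing.Theory Num.Theory.
Local Open Scope ring_scope.

(* Proof by generating functions.  Put n := d - k and view sequences as formal
   power series, truncated at some order N: two polynomials "agree below N"
   when their first N coefficients coincide, a relation compatible with
   multiplication.  The recurrence for p says exactly that
       C_n(x) * P(x) = 1  (mod x^N),     C_n(x) := (1 + x)^n (1 - n x),
   because for l >= 1 the coefficient of x^l in C_n is -(l-1) binom(n+1, l).
   On the other hand (1 + x)^n and 1 - n x have the truncated inverses
       A_n(x) = sum_i (-1)^i binom(n+i-1, i) x^i,   B(x) = sum_i n^i x^i,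
   so A_n B is a truncated inverse of C_n and therefore agrees with P below N;
   the coefficient of x^m of A_n B is the announced closed form.  The second
   statement is a reindexing: t_m = p_(mu-m) turns the backward recurrence
   for t into the forward recurrence for p, and strong induction gives
   uniqueness. *)

Section TruncatedSeries.
Variables (R : comNzRingType) (N : nat).

Definition agree_below (U V : {poly R}) : Prop :=
  forall i, (i < N)%N -> U`_i = V`_i.

Lemma agree_mull W U V : agree_below U V -> agree_below (W * U) (W * V).
Proof.
move=> UV i lt_iN; rewrite !coefM; apply: eq_bigr => j _; rewrite UV //.
exact: leq_ltn_trans (leq_subr j i) lt_iN.
Qed.

Lemma agree_mulr W U V : agree_below U V -> agree_below (U * W) (V * W).
Proof. by move=> UV; rewrite ![_ * W]mulrC; apply: agree_mull. Qed.

Lemma agree_inv_mul U U' V V' :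
  agree_below (U * U') 1 -> agree_below (V * V') 1 ->
  agree_below ((U * V) * (U' * V')) 1.
Proof.
move=> UU' VV' i lt_iN; rewrite mulrACA (agree_mulr (V * V') _ _ UU' _ lt_iN) mul1r.
exact: VV'.
Qed.

Lemma agree_inv_unique C P Q :
  agree_below (C * P) 1 -> agree_below (C * Q) 1 -> agree_below P Q.
Proof.
move=> CP CQ i lt_iN; rewrite -[P]mul1r -(agree_mulr P _ _ CQ _ lt_iN).
by rewrite mulrAC mulrC (agree_mull Q _ _ CP _ lt_iN) mulr1.
Qed.

End TruncatedSeries.

Arguments agree_below {R} N U V.
Arguments agree_mull {R N} W {U V}.
Arguments agree_mulr {R N} W {U V}.
Arguments agree_inv_mul {R N U U' V V'}.
Arguments agree_inv_unique {R N C P Q}.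

Section BinomialSeries.
Variable R : comNzRingType.

Lemma coef_XaddC1_exp (n i : nat) : (('X + 1) ^+ n : {poly R})`_i = 'C(n, i)%:R.
Proof.
elim: n i => [|n IHn] i; first by rewrite expr0 coefC; case: i.
rewrite exprSr mulrDr mulr1 coefD coefMX !IHn.
by case: i => [|i] /=; rewrite ?bin0 ?add0r // binS natrD addrC.
Qed.

(* The truncation at order N of the series (1 + x)^(-n). *)
Definition inv_binom_series (n N : nat) : {poly R} :=
  \poly_(i < N) ((-1) ^+ i * 'C(n + i - 1, i)%:R).

(* Pascal's rule in series form: (1 + x) A_(n+1) = A_n. *)
Lemma inv_binom_seriesS n N :
  agree_below N (('X + 1) * inv_binom_series n.+1 N) (inv_binom_series n N).
Proof.
move=> i lt_iN; rewrite mulrDl mul1r coefD coefXM !coef_poly lt_iN.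
case: i lt_iN => [|j] lt_jN /=; first by rewrite add0r !expr0 !bin0.
rewrite (ltnW lt_jN).
have -> : (n.+1 + j - 1 = n + j)%N by lia.
have -> : (n.+1 + j.+1 - 1 = (n + j).+1)%N by lia.
have -> : (n + j.+1 - 1 = n + j)%N by lia.
rewrite binS natrD exprS; ring.
Qed.

Lemma inv_binom_seriesP n N :
  agree_below N (('X + 1) ^+ n * inv_binom_series n N) 1.
Proof.
elim: n => [|n IHn] i lt_iN.
  rewrite expr0 mul1r coef_poly lt_iN coefC.
  case: i lt_iN => [|i] _ /=; first by rewrite expr0 mul1r.
  by rewrite bin_small ?mulr0 //; lia.
rewrite exprS -mulrA mulrCA (agree_mull _ (inv_binom_seriesS n N) _ lt_iN).
exact: IHn.
Qed.

Definition geom_series (c : R) (N : nat) : {poly R} := \poly_(i < N) c ^+ i.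

(* Telescoping: (1 - c x)(1 + c x + ... + c^(N-1) x^(N-1)) = 1 - c^N x^N. *)
Lemma geom_seriesP c N : agree_below N ((1 - c%:P * 'X) * geom_series c N) 1.
Proof.
move=> i lt_iN.
rewrite mulrBl mul1r coefB -mulrA coefCM coefXM !coef_poly lt_iN coefC.
case: i lt_iN => [|j] lt_jN /=; first by rewrite mulr0 subr0.
by rewrite (ltnW lt_jN) exprS subrr.
Qed.

Definition char_series (n : nat) : {poly R} := ('X + 1) ^+ n * (1 - n%:R%:P * 'X).

Lemma char_series_inverse n N :
  agree_below N (char_series n * (inv_binom_series n N * geom_series n%:R N)) 1.
Proof. exact: agree_inv_mul (inv_binom_seriesP n N) (geom_seriesP n%:R N). Qed.

Lemma coef0_char_series n : (char_series n)`_0 = 1.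
Proof.
by rewrite /char_series mulrBr mulr1 coefB mulrCA coefCM coefMX coef_XaddC1_exp
  bin0 mulr0 subr0.
Qed.

(* Absorption identity computing the coefficients of C_n: binom(n, j+1) - n binom(n, j)
   = -j binom(n+1, j+1). *)
Lemma bin_absorption (n j : nat) :
  (j * 'C(n.+1, j.+1) + 'C(n, j.+1) = n * 'C(n, j))%N.
Proof.
rewrite binS mulnDr -addnA addnCA -mulSnr mul_bin_left -mulnDl.
case: (leqP j n) => [le_jn|lt_nj]; first by rewrite subnKC.
by rewrite bin_small ?muln0.
Qed.

Lemma coefS_char_series n j :
  (char_series n)`_j.+1 = - (j * 'C(n.+1, j.+1))%:R.
Proof.
rewrite /char_series mulrBr mulr1 coefB mulrCA coefCM coefMX /= !coef_XaddC1_exp.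
have binE : 'C(n, j.+1)%:R = (n * 'C(n, j))%:R - (j * 'C(n.+1, j.+1))%:R :> R.
  by rewrite -bin_absorption natrD; ring.
by rewrite binE natrM; ring.
Qed.

End BinomialSeries.

Lemma backward_sumE (R : comNzRingType) (n m mu : nat) (g : nat -> R) :
  (m < mu)%N ->
  \sum_(m.+1 <= j < mu.+1) (g j * (j - m - 1)%:R * 'C(n.+1, j - m)%:R)
  = \sum_(1 <= l < (mu - m).+1) ((l.-1)%:R * 'C(n.+1, l)%:R * g (m + l)%N).
Proof.
move=> lt_m_mu; rewrite -(add1n m) big_addn.
have -> : (mu.+1 - m = (mu - m).+1)%N by lia.
apply: eq_bigr => l _.
have -> : (l + m - m - 1 = l.-1)%N by lia.
have -> : (l + m - m = l)%N by lia.
by rewrite [(m + l)%N]addnC -mulrA mulrC.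
Qed.

Section Recurrence.
Variables (R : comNzRingType) (n : nat) (p : nat -> R).

Hypothesis p0 : p 0%N = 1.
Hypothesis pS : forall m : nat, (0 < m)%N ->
  p m = \sum_(1 <= l < m.+1) ((l.-1)%:R * 'C(n.+1, l)%:R * p (m - l)%N).

Lemma char_series_gen N : agree_below N (char_series R n * \poly_(i < N) p i) 1.
Proof.
move=> i lt_iN; rewrite coefM coefC.
case: i lt_iN => [|i] lt_iN.
  by rewrite big_ord1 coef0_char_series coef_poly lt_iN mul1r.
rewrite big_ord_recl coef0_char_series mul1r coef_poly lt_iN /=.
rewrite (pS i.+1 (ltn0Sn i)) big_add1 /= big_mkord -big_split /=; apply: big1 => j _.
rewrite coefS_char_series coef_poly /bump /= add1n ifT; [ring | lia].
Qed.

(* Closed form: P agrees with A_n B below every order, and coefficient m of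
   A_n B is the convolution sum. *)
Lemma recurrence_closed_form m :
  p m = \sum_(0 <= l < m.+1) ((-1) ^+ l * n%:R ^+ (m - l) * 'C(n + l - 1, l)%:R).
Proof.
have := agree_inv_unique (char_series_gen m.+1) (char_series_inverse R n m.+1) _ (ltnSn m).
rewrite coef_poly ltnSn coefM big_mkord => ->; apply: eq_bigr => [[j lt_jm]] _ /=.
by rewrite !coef_poly lt_jm ifT; [ring | lia].
Qed.

Lemma backward_recurrence_iff mu (t : nat -> R) :
  (t mu = 1 /\ forall m : nat, (m < mu)%N ->
     t m = \sum_(m.+1 <= j < mu.+1) (t j * (j - m - 1)%:R * 'C(n.+1, j - m)%:R))
  <-> (forall m : nat, (m <= mu)%N -> t m = p (mu - m)%N).
Proof.
split=> [[t_mu t_rec]|tE]; last first.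
  split=> [|m lt_m_mu]; first by rewrite tE // subnn p0.
  rewrite tE ?(ltnW lt_m_mu) // backward_sumE // (pS (mu - m)) ?subn_gt0 //.
  by apply: eq_big_nat => l /andP[_ lt_l]; rewrite tE ?subnDA //; lia.
suff tE : forall r, (r <= mu)%N -> t (mu - r)%N = p r.
  by move=> m le_m_mu; rewrite -tE ?leq_subr // subKn.
elim/ltn_ind => -[_ _|r IHr le_r_mu]; first by rewrite subn0 t_mu p0.
rewrite t_rec ?backward_sumE; [|lia|lia].
rewrite subKn // (pS r.+1 (ltn0Sn r)).
apply: eq_big_nat => l /andP[lt0l lt_l].
have -> : (mu - r.+1 + l = mu - (r.+1 - l))%N by lia.
by rewrite IHr //; lia.
Qed.

End Recurrence.

Theorem lemma3 (d k : nat) (hk1 : (1 <= k)%N) (hkd : (k <= d)%N)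
  (p : nat -> int)
  (p0 : p 0%N = 1)
  (pS : forall m : nat, (0 < m)%N ->
     p m = \sum_(1 <= l < m.+1) ((l.-1)%:Z * ('C(d - k + 1, l))%:Z * p (m - l)%N)) :
  (forall m : nat,
     p m = \sum_(0 <= l < m.+1)
             ((-1) ^+ l * ((d - k) ^ (m - l))%N%:Z * ('C(d - k + l - 1, l))%:Z))
  /\
  (forall (mu : nat) (t : nat -> int),
     (t mu = 1 /\
      forall m : nat, (m < mu)%N ->
        t m = \sum_(m.+1 <= j < mu.+1) (t j * (j - m - 1)%N%:Z * ('C(d - k + 1, j - m))%:Z))
     <-> (forall m : nat, (m <= mu)%N -> t m = p (mu - m)%N)).
Proof.
(* In int the cast n%:R is n%:Z (natz); rewrite everything to the ring form. *)
have pS' : forall m : nat, (0 < m)%N ->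
    p m = \sum_(1 <= l < m.+1) ((l.-1)%:R * 'C((d - k).+1, l)%:R * p (m - l)%N).
  by move=> m /pS ->; apply: eq_bigr => l _; rewrite !natz addn1.
split=> [m|mu t].
  rewrite (recurrence_closed_form _ _ _ p0 pS'); apply: eq_bigr => l _.
  by rewrite -natrX !natz.
have recE : forall m : nat,
    \sum_(m.+1 <= j < mu.+1) (t j * (j - m - 1)%N%:Z * ('C(d - k + 1, j - m))%:Z)
    = \sum_(m.+1 <= j < mu.+1) (t j * (j - m - 1)%:R * 'C((d - k).+1, j - m)%:R).
  by move=> m; apply: eq_bigr => j _; rewrite !natz addn1.
setoid_rewrite recE; exact: backward_recurrence_iff _ _ _ p0 pS' mu t.
Qed.
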